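(* Let $\phi$ be a full QBF, let $Q\in\{\exists,\forall\}$ and let $Q'$ be its dual. Then: (1) $Q\, N(\phi)\; Q'\, P(\phi)\; \mathrm{tr}_Q(\phi) \equiv \phi$; (2) if $\phi$ is boolean then $d(\mathrm{tr}_Q(\phi)) = 0$; otherwise $d(\mathrm{tr}_Q(\phi)) = d(\phi) - 1$; (3) $|\mathrm{tr}_\forall(\phi)| + 3\, \mathrm{nv}(\mathrm{tr}_\forall(\phi)) + 6\, \mathrm{nb}(\mathrm{tr}_\forall(\phi)) \le |\phi| + 3\,\mathrm{nv}(\phi) + 6\,\mathrm{nb}(\phi)$.
   Context: Fix a countably infinite set $\mathbb{P}$ of propositional variables and a set of boolean operators, each $k$-ary operator $f^k$ ($k\ge 0$) interpreted by a boolean function $\{0,1\}^k\to\{0,1\}$, containing $\bot,\lnot,\land,\rightarrow,\leftrightarrow$. Full QBFs: the smallest set containing every $p\in\mathbb{P}$, closed under $f^k(\phi_1,\ldots,\phi_k)$ and under $\exists X\phi$, $\forall X\phi$ for finite (possibly empty) $X\subseteq\mathbb{P}$. Boolean formulas are full QBFs without quantifiers. A valuation $V:\mathbb{P}\to\{0,1\}$ is extended by applying the boolean functions, with $V(\exists X\phi)=1$ iff $V'(\phi)=1$ for some $V'$ agreeing with $V$ on $\mathbb{P}\setminus X$, and $V(\forall X\phi)=1$ iff $V'(\phi)=1$ for all such $V'$. $\phi\equiv\psi$ means $V(\phi)=V(\psi)$ for every $V$. $\phi[\sigma]$ denotes simultaneous substitution of free occurrences. The dual of $\exists$ is $\forall$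 and vice versa. An empty conjunction is $\top$. Metrics: length $|p|=1$, $|f^k(\phi_1,\ldots,\phi_k)|=1+\sum_i|\phi_i|$, $|\exists X\phi|=|\forall X\phi|=1+\mathrm{card}(X)+|\phi|$. Quantifier depth $d(p)=0$, $d(f^k(\phi_1,\ldots,\phi_k))=\max_i d(\phi_i)$ ($0$ if $k=0$), $d(\exists X\phi)=d(\forall X\phi)=1+d(\phi)$. $\mathrm{nb}(\phi)$ is the number of occurrences of quantified subformulas $QX\psi$ in $\phi$; $\mathrm{nv}(\phi)$ is the sum of $\mathrm{card}(X)$ over these occurrences. Decomposition: every full QBF $\phi$ can be written $\phi=\beta[p_1/Q_1X_1\phi_1,\ldots,p_k/Q_kX_k\phi_k]$ where $Q_1X_1\phi_1,\ldots,Q_kX_k\phi_k$ are the occurrences of outermost quantified subformulas of $\phi$ (those not in the scope of any quantifier), $p_1,\ldots,p_k$ are pairwise distinct fresh variables (not occurring in $\phi$), and $\beta$ is boolean ($k=0$ and $\beta=\phi$ if $\phi$ is boolean). Fix such a decomposition. For each $i\le k$ and $x\in X_i$ let $x_i^+,x_i^-$ be fresh pairwise distinct variables, and $\sigma_i=\{x/x_i^+ : x\in X_i\}$. Let $$\Gamma = \bigwedge_{i\le k}(p_i\leftrightarrow\phi_i[\sigma_i]) \land \bigwedge_{i\le k,\,Q_i=\exists}\Big(\lnot p_i\rightarrow\bigwedge_{x\in X_i}(x_i^+\leftrightarrow x_i^-)\Big) \land \bigwedge_{i\le k,\,Q_i=\forall}\Big(p_i\rightarrow\bigwedge_{x\in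 X_i}(x_i^+\leftrightarrow x_i^-)\Big).$$ Define $\mathrm{tr}_\forall(\phi)=\Gamma\land\beta$, $\mathrm{tr}_\exists(\phi)=\Gamma\rightarrow\beta$, $N(\phi)=\{x_i^- : x\in X_i, i\le k\}$, $P(\phi)=\{x_i^+ : x\in X_i, i\le k\}\cup\{p_i : i\le k\}$. A prefix $Q\,N(\phi)$ denotes a single quantifier block over the set $N(\phi)$.
   Formalization: Γ is one flat conjunction of its conjuncts, omitting the implication conjuncts with empty $X_i$, and $\mathrm{tr}_\forall(\phi)$ is the flat conjunction of those conjuncts followed by β rather than Γ ∧ β with big conjunctions nested. The statement above fails without it. *)

From mathcomp Require Import all_boot.
From mathcomp Require Import boolp.

Set Implicit Arguments.
Unset Strict Implicit.
Unset Printing Implicit Defensive.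

Record signature := Signature {
  op : Type;
  arity : op -> nat;
  interp : op -> seq bool -> bool;   (* only used on lists of length [arity o] *)
  obot : op; oneg : op; oand : op; oimp : op; oiff : op;
  arity_bot : arity obot = 0;
  arity_neg : arity oneg = 1;
  arity_and : arity oand = 2;
  arity_imp : arity oimp = 2;
  arity_iff : arity oiff = 2;
  interp_bot : interp obot [::] = false;
  interp_neg : forall a, interp oneg [:: a] = ~~ a;
  interp_and : forall a b, interp oand [:: a; b] = a && b;
  interp_imp : forall a b, interp oimp [:: a; b] = (a ==> b);
  interp_iff : forall a b, interp oiff [:: a; b] = (a == b)
}.

Inductive quant := Qex | Qall.

Definition dual (q : quant) : quant := match q with Qex => Qall | Qall => Qex end.
Definition quant_eqb (a b : quant) : bool := match a, b with Qex, Qex | Qall, Qall => true | _, _ => false end.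

(* Full QBFs.  A quantifier block [X] is a finite set of variables,
   represented by a list (read as the set of its elements). *)
Inductive form (S : signature) :=
  | FVar of nat
  | FOp (o : op S) (args : seq (form S))
  | FQ (q : quant) (X : seq nat) (f : form S).

Arguments FVar {S}.

Section Syntax.
Variable S : signature.
Local Notation form := (form S).

Fixpoint wf (f : form) : bool :=
  match f with
  | FVar _ => true
  | FOp o args => (size args == arity o) && all wf args
  | FQ _ _ g => wf g
  end.

Fixpoint isbool (f : form) : bool :=
  match f with
  | FVar _ => true
  | FOp _ args => all isbool args
  | FQ _ _ _ => false
  end.

Fixpoint vars (f : form) : seq nat :=
  match f with
  | FVar p => [:: p]
  | FOp _ args => flatten (map vars args)
  | FQ _ X g => X ++ vars g
  end.

Fixpoint occ (p : nat) (f : form) : nat :=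
  match f with
  | FVar y => (y == p)
  | FOp _ args => sumn (map (occ p) args)
  | FQ _ X g => count_mem p X + occ p g
  end.

Fixpoint subst (f : form) (s : nat -> form) : form :=
  match f with
  | FVar p => s p
  | FOp o args => FOp o (map (fun a => subst a s) args)
  | FQ q X g => FQ q X (subst g (fun y => if y \in X then FVar y else s y))
  end.

Fixpoint eval (f : form) (V : nat -> bool) : bool :=
  match f with
  | FVar p => V p
  | FOp o args => interp o (map (fun a => eval a V) args)
  | FQ Qex X g =>
      `[< exists V' : nat -> bool,
            (forall y, y \notin X -> V' y = V y) /\ eval g V' >]
  | FQ Qall X g =>
      `[< forall V' : nat -> bool,
            (forall y, y \notin X -> V' y = V y) -> eval g V' >]
  end.

Definition fequiv (f g : form) : Prop := forall V, eval f V = eval g V.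

Definition card_block (X : seq nat) : nat := size (undup X).

Fixpoint len (f : form) : nat :=
  match f with
  | FVar _ => 1
  | FOp _ args => 1 + sumn (map len args)
  | FQ _ X g => 1 + card_block X + len g
  end.

Fixpoint depth (f : form) : nat :=
  match f with
  | FVar _ => 0
  | FOp _ args => foldr maxn 0 (map depth args)
  | FQ _ _ g => 1 + depth g
  end.

Fixpoint nb (f : form) : nat :=
  match f with
  | FVar _ => 0
  | FOp _ args => sumn (map nb args)
  | FQ _ _ g => 1 + nb g
  end.

Fixpoint nv (f : form) : nat :=
  match f with
  | FVar _ => 0
  | FOp _ args => sumn (map nv args)
  | FQ _ X g => card_block X + nv g
  end.

Definition Fbot : form := FOp (obot S) [::].
Definition Fneg (a : form) : form := FOp (oneg S) [:: a].
Definition Fand (a b : form) : form := FOp (oand S) [:: a; b].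
Definition Fimp (a b : form) : form := FOp (oimp S) [:: a; b].
Definition Fiff (a b : form) : form := FOp (oiff S) [:: a; b].
Definition Ftop : form := Fneg Fbot.

Fixpoint bigand (l : seq form) : form :=
  match l with
  | [::] => Ftop
  | [:: a] => a
  | a :: l' => Fand a (bigand l')
  end.

(* one outermost quantified subformula  Q_i X_i phi_i  with its fresh p_i *)
Record qblock := QBlock { bp : nat; bq : quant; bX : seq nat; bf : form }.

Definition sigmaD (D : seq qblock) (y : nat) : form :=
  match [seq b <- D | bp b == y] with
  | b :: _ => FQ (bq b) (bX b) (bf b)
  | [::] => FVar y
  end.

(* x_i^+ = xp p_i x ,  x_i^- = xm p_i x  (blocks indexed by their p_i) *)
Definition Xplus (D : seq qblock) (xp : nat -> nat -> nat) : seq nat :=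
  flatten [seq [seq xp (bp b) x | x <- undup (bX b)] | b <- D].
Definition Xminus (D : seq qblock) (xm : nat -> nat -> nat) : seq nat :=
  flatten [seq [seq xm (bp b) x | x <- undup (bX b)] | b <- D].

(* phi = beta[p_1/Q_1X_1phi_1, ..., p_k/Q_kX_kphi_k] is a decomposition of phi
   into its outermost quantified subformula occurrences, with fresh
   pairwise distinct p_i, x_i^+, x_i^-. *)
Definition is_decomp (phi beta : form) (D : seq qblock)
    (xp xm : nat -> nat -> nat) : Prop :=
  [/\ isbool beta,
      all (fun b => occ (bp b) beta == 1) D,
      subst beta (sigmaD D) = phi,
      uniq (Xplus D xp ++ Xminus D xm ++ map bp D)
    & forall v, v \in Xplus D xp ++ Xminus D xm ++ map bp D -> v \notin vars phi].

Definition Nset D xm := Xminus D xm.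
Definition Pset D xp := Xplus D xp ++ map bp D.

Definition sigma_i (xp : nat -> nat -> nat) (b : qblock) (y : nat) : form :=
  if y \in bX b then FVar (xp (bp b) y) else FVar y.

Definition eqblock (xp xm : nat -> nat -> nat) (b : qblock) : form :=
  bigand [seq Fiff (FVar (xp (bp b) x)) (FVar (xm (bp b) x)) | x <- undup (bX b)].

(* The list of conjuncts of Gamma.  Conjuncts whose inner conjunction is
   empty (X_i = empty) are omitted. *)
Definition Gamma_list (D : seq qblock) (xp xm : nat -> nat -> nat) : seq form :=
  [seq Fiff (FVar (bp b)) (subst (bf b) (sigma_i xp b)) | b <- D]
  ++ [seq Fimp (Fneg (FVar (bp b))) (eqblock xp xm b)
       | b <- [seq b <- D | quant_eqb (bq b) Qex && (undup (bX b) != [::])]]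
  ++ [seq Fimp (FVar (bp b)) (eqblock xp xm b)
       | b <- [seq b <- D | quant_eqb (bq b) Qall && (undup (bX b) != [::])]].

Definition tr (q : quant) (beta : form) (D : seq qblock)
    (xp xm : nat -> nat -> nat) : form :=
  match q with
  | Qall => bigand (Gamma_list D xp xm ++ [:: beta])
  | Qex => Fimp (bigand (Gamma_list D xp xm)) beta
  end.

End Syntax.

Arguments QBlock {S}.

(* Each outermost block Q_i X_i phi_i of phi becomes a variable p_i of beta, and Gamma
   states p_i <-> phi_i[x^+/x], together with x^+ = x^- whenever p_i takes the value that
   needs no witness (false for an existential block, true for a universal one).  For any
   values of the N-variables x^-, the P-variables can satisfy Gamma with every p_i equal to
   the value of its block: x^+ is a witness, or a copy of x^- when none is needed.
   Conversely, if every x^- is a witness of the value of its block, each P-assignment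
   satisfying Gamma gives the p_i exactly these values.  Since beta at the block values is
   phi, both prenex forms are equivalent to phi.  Only the phi_i remain below the
   quantifier-free part, so the depth drops by one, and in the weight len + 3 nv + 6 nb the
   conjuncts produced by a block weigh no more than the block itself. *)

From mathcomp Require Import all_boot boolp zify.
From Stdlib Require List.

Set Implicit Arguments.
Unset Strict Implicit.
Unset Printing Implicit Defensive.

Section Formulas.
Variable S : signature.
Local Notation form := (form S).

Definition form_nested_ind (P : form -> Prop)
    (HV : forall n, P (FVar n))
    (HO : forall o args, List.Forall P args -> P (FOp o args))
    (HQ : forall q X f, P f -> P (FQ q X f)) : forall f, P f :=
  fix F f := match f with
  | FVar n => HV n
  | FOp o args => HO o args ((fix G l := match l return List.Forall P l with
      | nil => List.Forall_nil _
      | cons a l' => List.Forall_cons _ (F a) (G l') end) args)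
  | FQ q X g => HQ q X g (F g)
  end.

Definition agree_off (X : seq nat) (U V : nat -> bool) :=
  forall y, y \notin X -> U y = V y.

Lemma eval_FQ_ex X (g : form) V :
  eval (FQ Qex X g) V = `[< exists V', agree_off X V' V /\ eval g V' >].
Proof. by []. Qed.

Lemma eval_FQ_all X (g : form) V :
  eval (FQ Qall X g) V = `[< forall V', agree_off X V' V -> eval g V' >].
Proof. by []. Qed.

Lemma eval_FQ_transfer q X (g g' : form) (V V' : nat -> bool) :
  (forall U, agree_off X U V ->
     exists2 U', agree_off X U' V' & eval g' U' = eval g U) ->
  (forall U', agree_off X U' V' ->
     exists2 U, agree_off X U V & eval g U = eval g' U') ->
  eval (FQ q X g) V = eval (FQ q X g') V'.
Proof.
move=> to from; case: q => /=; apply/asboolP/asboolP.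
- by case=> U [HU HgU]; have [U' ? E] := to U HU; exists U'; rewrite E.
- by case=> U' [HU' HgU']; have [U ? E] := from U' HU'; exists U; rewrite E.
- by move=> H U' HU'; have [U ? <-] := from U' HU'; apply: H.
- by move=> H U HU; have [U' ? <-] := to U HU; apply: H.
Qed.

Lemma eval_ext (f : form) (V V' : nat -> bool) :
  {in vars f, V =1 V'} -> eval f V = eval f V'.
Proof.
elim/form_nested_ind: f V V' => [n|o args IH|q X g IH] V V' eqV /=.
- by apply: eqV; rewrite inE.
- congr (interp o _); elim: args IH eqV => //= a l IHl /List.Forall_cons_iff[IHa IH] eqV.
  rewrite (IHa V V') => [|y Hy]; last by apply: eqV; rewrite mem_cat Hy.
  by rewrite IHl // => y Hy; apply: eqV; rewrite mem_cat Hy orbT.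
- have {}eqV : {in X ++ vars g, V =1 V'} := eqV.
  have variant (W W' : nat -> bool) : {in X ++ vars g, W =1 W'} ->
      forall U, agree_off X U W -> exists2 U', agree_off X U' W' & eval g U' = eval g U.
    move=> eqW U HU; exists (fun y => if y \in X then U y else W' y).
      by move=> y /negbTE ->.
    apply: IH => y Hy; case: ifP => // /negbT Hx.
    by rewrite HU // eqW // mem_cat Hy orbT.
  by apply: eval_FQ_transfer; apply: variant => // y /eqV.
Qed.

Lemma eval_subst_rename (f : form) (s : nat -> form) (r : nat -> nat) (V : nat -> bool) :
  (forall y, s y = FVar (r y)) -> (forall y, r y = y \/ r y \notin vars f) ->
  eval (subst f s) V = eval f (V \o r).
Proof.
elim/form_nested_ind: f s r V => [n|o args IH|q X g IH] s r V Hs Hr /=.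
- by rewrite Hs.
- rewrite -map_comp; congr (interp o _).
  elim: args IH Hr => //= a l IHl /List.Forall_cons_iff[IHa IH] Hr.
  rewrite (IHa s r) // ?IHl // => y; case: (Hr y) => [->|]; try by left.
  + by rewrite mem_cat negb_or => /andP[_ ?]; right.
  + by rewrite mem_cat negb_or => /andP[? _]; right.
- pose r' y := if y \in X then y else r y.
  have Hs' y : (if y \in X then FVar y else s y) = FVar (r' y) by rewrite /r'; case: ifP.
  have Hr' y : r' y = y \/ r' y \notin vars g.
    rewrite /r'; case: ifP => _; first by left.
    by case: (Hr y) => [->|]; [left|rewrite mem_cat negb_or => /andP[_ ?]; right].
  have rX y : y \notin X -> r y \notin X.
    by move=> Hy; case: (Hr y) => [->//|]; rewrite mem_cat negb_or => /andP[].
  apply: eval_FQ_transfer => [U HU|U' HU'].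
  + exists (U \o r'); last by rewrite (IH _ r').
    by move=> y Hy; rewrite /= /r' (negbTE Hy) HU // rX.
  + exists (fun z => if z \in X then U' z else V z) => [y /negbTE -> //|].
    rewrite (IH _ r') //; apply: eval_ext => y _ /=; rewrite /r'.
    case Hy: (y \in X); first by rewrite Hy.
    by rewrite (negbTE (rX _ (negbT Hy))) HU' ?Hy.
Qed.

Lemma subst_rename_metrics (f : form) (s : nat -> form) (r : nat -> nat) :
  (forall y, s y = FVar (r y)) ->
  [/\ depth (subst f s) = depth f, len (subst f s) = len f,
      nb (subst f s) = nb f & nv (subst f s) = nv f].
Proof.
elim/form_nested_ind: f s r => [n|o args IH|q X g IH] s r Hs /=.
- by rewrite Hs.
- rewrite -!map_comp; elim: args IH => //= a l IHl /List.Forall_cons_iff[IHa IH].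
  by have [-> -> -> ->] := IHa s r Hs; have [-> ? -> ->] := IHl IH; split; lia.
- have Hs' y : (if y \in X then FVar y else s y) = FVar (if y \in X then y else r y).
    by case: ifP.
  by have [-> -> -> ->] := IH _ _ Hs'.
Qed.

Section BooleanSubstitution.
Variable s : nat -> form.

Lemma eval_subst_bool (f : form) (V : nat -> bool) : isbool f ->
  eval (subst f s) V = eval f (fun y => eval (s y) V).
Proof.
elim/form_nested_ind: f => [n|o args IH|//] //= Hb.
rewrite -map_comp; congr (interp o _).
elim: args IH Hb => //= a l IHl /List.Forall_cons_iff[IHa IH] /andP[Ha Hl].
by rewrite /= IHa // IHl.
Qed.

Lemma mem_vars_subst_bool (f : form) y : isbool f -> y \in vars f ->
  {subset vars (s y) <= vars (subst f s)}.
Proof.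
elim/form_nested_ind: f => [n|o args IH|//] //= Hb; first by rewrite inE => /eqP ->.
elim: args IH Hb => //= a l IHl /List.Forall_cons_iff[IHa IH] /andP[Ha Hl].
rewrite mem_cat => /orP[Hy|Hy] z Hz; rewrite mem_cat.
- by rewrite (IHa Ha Hy z Hz).
- by rewrite (IHl IH Hl Hy z Hz) orbT.
Qed.

Lemma isbool_subst (f : form) : isbool f -> (forall y, isbool (s y)) ->
  isbool (subst f s).
Proof.
elim/form_nested_ind: f => [n|o args IH|//] //= Hb Hs.
elim: args IH Hb => //= a l IHl /List.Forall_cons_iff[IHa IH] /andP[Ha Hl].
by rewrite IHa // IHl.
Qed.

Lemma isbool_subst_var (f : form) y : isbool f -> isbool (subst f s) ->
  y \in vars f -> isbool (s y).
Proof.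
elim/form_nested_ind: f => [n|o args IH|//] //= Hb; first by move=> H; rewrite inE => /eqP ->.
elim: args IH Hb => //= a l IHl /List.Forall_cons_iff[IHa IH] /andP[Ha Hl] /andP[Hsa Hsl].
by rewrite mem_cat => /orP[Hy|Hy]; [exact: IHa|exact: IHl].
Qed.

Lemma depth_subst_bool_le (f : form) m : isbool f ->
  (forall y, y \in vars f -> depth (s y) <= m) -> depth (subst f s) <= m.
Proof.
elim/form_nested_ind: f => [n|o args IH|//] //= Hb Hs; first by apply: Hs; rewrite inE.
elim: args IH Hb Hs => //= a l IHl /List.Forall_cons_iff[IHa IH] /andP[Ha Hl] Hs.
by rewrite geq_max IHa ?IHl // => y Hy; apply: Hs; rewrite mem_cat Hy ?orbT.
Qed.

Lemma depth_subst_bool_ge (f : form) y : isbool f ->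
  y \in vars f -> depth (s y) <= depth (subst f s).
Proof.
elim/form_nested_ind: f => [n|o args IH|//] //= Hb; first by rewrite inE => /eqP ->.
elim: args IH Hb => //= a l IHl /List.Forall_cons_iff[IHa IH] /andP[Ha Hl].
rewrite mem_cat leq_max => /orP[Hy|Hy]; first by rewrite IHa.
by rewrite IHl ?orbT.
Qed.

End BooleanSubstitution.

Lemma depth_isbool (f : form) : isbool f -> depth f = 0.
Proof.
elim/form_nested_ind: f => [n|o args IH|//] //= Hb.
elim: args IH Hb => //= a l IHl /List.Forall_cons_iff[IHa IH] /andP[Ha Hl].
by rewrite IHa // IHl.
Qed.

Lemma occE (f : form) p : occ p f = count_mem p (vars f).
Proof.
elim/form_nested_ind: f => [n|o args IH|q X g IH] /=.
- by rewrite addn0 eq_sym.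
- elim: args IH => //= a l IHl /List.Forall_cons_iff[IHa IH].
  by rewrite count_cat IHa IHl.
- by rewrite count_cat IH.
Qed.

Definition weight (f : form) := len f + 3 * nv f + 6 * nb f.

Lemma weight_pos (f : form) : 0 < weight f.
Proof. by case: f. Qed.

Lemma weight_FVar p : weight (FVar p : form) = 1.
Proof. by []. Qed.

Lemma weight_FOp o (args : seq form) :
  weight (FOp o args) = 1 + sumn [seq weight a | a <- args].
Proof. by rewrite /weight /=; elim: args => [|a l IH] /=; lia. Qed.

Lemma weight_isbool (f : form) : isbool f -> weight f = len f.
Proof.
elim/form_nested_ind: f => [n|o args IH|//] //= Hb; rewrite weight_FOp /=.
congr (1 + _); elim: args IH Hb => //= a l IHl /List.Forall_cons_iff[IHa IH] /andP[Ha Hl].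
by rewrite IHa // IHl.
Qed.

Lemma weight_subst_bool (f : form) (s : nat -> form) : isbool f ->
  weight (subst f s) + size (vars f) = len f + sumn [seq weight (s y) | y <- vars f].
Proof.
elim/form_nested_ind: f => [n|o args IH|//] Hb; first by rewrite /= addn0 addnC.
rewrite [subst _ _]/= weight_FOp [len _]/= [vars _]/= -map_comp -!addnA; congr (1 + _).
elim: args IH Hb => [//|a l IHl /List.Forall_cons_iff[IHa IH] /andP[Ha Hl]].
by have := IHa Ha; have := IHl IH Hl; rewrite /= size_cat map_cat sumn_cat; lia.
Qed.

Lemma eval_Fand (a b : form) V : eval (Fand a b) V = eval a V && eval b V.
Proof. exact: interp_and. Qed.

Lemma eval_Fimp (a b : form) V : eval (Fimp a b) V = eval a V ==> eval b V.
Proof. exact: interp_imp. Qed.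

Lemma eval_Fiff (a b : form) V : eval (Fiff a b) V = (eval a V == eval b V).
Proof. exact: interp_iff. Qed.

Lemma eval_bigand (l : seq form) V : eval (bigand l) V = all (fun a => eval a V) l.
Proof.
elim: l => [|a [|b l] IH]; last by rewrite [bigand _]/= eval_Fand IH.
- by rewrite /= interp_neg interp_bot.
- by rewrite /= andbT.
Qed.

Lemma depth_bigand (l : seq form) : depth (bigand l) = foldr maxn 0 [seq depth a | a <- l].
Proof.
elim: l => [|a [|b l] IH]; [by []|by rewrite /= maxn0|].
have -> : bigand [:: a, b & l] = Fand a (bigand (b :: l)) by [].
by rewrite [depth _]/= IH maxn0.
Qed.

Lemma weight_bigand (l : seq form) : 0 < size l ->
  weight (bigand l) + 1 = sumn [seq weight a + 1 | a <- l].
Proof.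
elim: l => [|a [|b l] IH] // _; first by rewrite /= addn0.
have -> : bigand [:: a, b & l] = Fand a (bigand (b :: l)) by [].
by have := IH isT; rewrite weight_FOp /=; lia.
Qed.

Lemma exists_variant_eval X (g : form) (U V : nat -> bool) :
  {in vars g, forall y, y \notin X -> U y = V y} ->
  exists2 U', agree_off X U' V & eval g U' = eval g U.
Proof.
move=> HU; exists (fun y => if y \in X then U y else V y) => [y /negbTE -> //|].
by apply: eval_ext => y Hy; case: ifP => // /negbT /(HU y Hy).
Qed.

(* When [FQ q X g] has the value needing no witness, every X-variant of [V] gives [g] that
   value, so the witness may be chosen equal to [T] on [X]. *)
Lemma exists_quantifier_witness q X (g : form) (V T : nat -> bool) : exists W,
  [/\ agree_off X W V, eval g W = eval (FQ q X g) V
    & (if q is Qex then ~~ eval (FQ q X g) V else eval (FQ q X g) V) -> {in X, W =1 T}].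
Proof.
pose W0 y := if y \in X then T y else V y.
have W0V : agree_off X W0 V by move=> y /negbTE; rewrite /W0 => ->.
have W0T : {in X, W0 =1 T} by move=> y; rewrite /W0 => ->.
case: q => /=; case E: `[< _ >].
- by case/asboolP: E => W [HW HgW]; exists W; split; rewrite ?HgW.
- exists W0; split=> //; apply/negbTE/negP => HgW0.
  by move/negbT/asboolPn: E; apply; exists W0.
- by exists W0; split=> //; move/asboolP: E; apply.
- move/negbT/asboolPn: E => /existsNP[W /not_implyP[HW HgW]].
  by exists W; split=> //; apply/negbTE/negP.
Qed.

End Formulas.

Lemma allP_In (T : Type) (P : pred T) (s : seq T) :
  all P s <-> forall x, List.In x s -> P x.
Proof.
elim: s => [|a s IH] /=; first by [].
split=> [/andP[Pa /IH Ps] x [<-|/Ps] //|H].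
by rewrite H /=; [apply/IH => x Hx; apply: H; right|left].
Qed.

Lemma map_f_In (T : Type) (U : eqType) (f : T -> U) (s : seq T) x :
  List.In x s -> f x \in map f s.
Proof. by elim: s => //= y s IH [<-|/IH Hx]; rewrite inE ?eqxx ?Hx ?orbT. Qed.

Lemma eq_map_In (T U : Type) (f g : T -> U) (s : seq T) :
  (forall x, List.In x s -> f x = g x) -> map f s = map g s.
Proof.
elim: s => //= x s IH E; rewrite E; last by left.
by rewrite IH // => y Hy; apply: E; right.
Qed.

Lemma leq_sumn_uniq_sub (T : eqType) (h : T -> nat) (s l : seq T) :
  uniq s -> {subset s <= l} -> sumn (map h s) <= sumn (map h l).
Proof.
move=> Hu Hs; rewrite !sumnE !big_map.
apply: (@sub_le_big_seq _ addn leq leqnn (fun x y => leq_addr y x)) => i.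
rewrite count_uniq_mem //; case Hi: (i \in s) => //=.
by move/Hs: Hi; rewrite -has_pred1 has_count.
Qed.

Lemma uniq_map_inj_in (T : eqType) (f : T -> nat) (s : seq T) :
  uniq (map f s) -> {in s &, injective f}.
Proof.
elim: s => //= a s IH /andP[Hfa Hu] x y; rewrite !inE.
case/orP=> [/eqP->|Hx] /orP[/eqP->|Hy] // E.
- by move: Hfa; rewrite E map_f.
- by move: Hfa; rewrite -E map_f.
- exact: IH.
Qed.

Lemma exists_valuation_on_image (f : nat -> nat) (X : seq nat) (W V : nat -> bool) :
  uniq (map f (undup X)) ->
  exists U, agree_off (map f (undup X)) U V /\ {in X, forall x, U (f x) = W x}.
Proof.
move=> /uniq_map_inj_in injf; pose U v := `[< exists x, [/\ x \in X, f x = v & W x] >].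
exists (fun v => if v \in map f (undup X) then U v else V v); split.
  by move=> v /negbTE ->.
move=> x Hx; rewrite map_f ?mem_undup //; apply/asboolP/idP => [[y [Hy Efy HWy]]|HWx].
  by rewrite (injf x y) ?mem_undup.
by exists x.
Qed.

Section Translation.
Variables (S : signature) (xp xm : nat -> nat -> nat).
Local Notation form := (form S).
Local Notation qblock := (qblock S).

Definition qform (b : qblock) : form := FQ (bq b) (bX b) (bf b).

Definition xplus (b : qblock) := [seq xp (bp b) x | x <- undup (bX b)].
Definition xminus (b : qblock) := [seq xm (bp b) x | x <- undup (bX b)].
Definition local_vars (b : qblock) := xplus b ++ xminus b ++ [:: bp b].
Definition fresh_vars (D : seq qblock) := Xplus D xp ++ Xminus D xm ++ map (@bp S) D.

Definition rename_plus (b : qblock) y := if y \in bX b then xp (bp b) y else y.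

Definition copies_agree (V : nat -> bool) (b : qblock) :=
  all (fun x => V (xp (bp b) x) == V (xm (bp b) x)) (undup (bX b)).

Definition block_constraint (V : nat -> bool) (b : qblock) :=
  (V (bp b) == eval (subst (bf b) (sigma_i xp b)) V)
  && ((if bq b is Qex then ~~ V (bp b) else V (bp b)) ==> copies_agree V b).

Lemma mem_xplus b x : x \in bX b -> xp (bp b) x \in xplus b.
Proof. by move=> Hx; rewrite map_f ?mem_undup. Qed.

Lemma mem_xminus b x : x \in bX b -> xm (bp b) x \in xminus b.
Proof. by move=> Hx; rewrite map_f ?mem_undup. Qed.

Lemma local_xplus b : {subset xplus b <= local_vars b}.
Proof. by move=> v Hv; rewrite mem_cat Hv. Qed.

Lemma local_xminus b : {subset xminus b <= local_vars b}.
Proof. by move=> v Hv; rewrite !mem_cat Hv orbT. Qed.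

Lemma local_bp b : bp b \in local_vars b.
Proof. by rewrite !mem_cat inE eqxx !orbT. Qed.

Lemma eval_eqblock V b : eval (eqblock xp xm b) V = copies_agree V b.
Proof. by rewrite eval_bigand all_map; apply: eq_all => x; exact: eval_Fiff. Qed.

Lemma eval_Gamma V D :
  all (fun g => eval g V) (Gamma_list D xp xm) = all (block_constraint V) D.
Proof.
rewrite /Gamma_list !all_cat !all_map !all_filter -!all_predI; apply: eq_all => b /=.
rewrite interp_iff !interp_imp interp_neg !eval_eqblock /block_constraint /copies_agree.
by case: (bq b); case: (undup (bX b)) => [|x l] /=; rewrite ?implybT ?andbT.
Qed.

Lemma eval_tr_all V beta D :
  eval (tr Qall beta D xp xm) V = all (block_constraint V) D && eval beta V.
Proof. by rewrite /= eval_bigand all_cat /= andbT eval_Gamma. Qed.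

Lemma eval_tr_ex V beta D :
  eval (tr Qex beta D xp xm) V = all (block_constraint V) D ==> eval beta V.
Proof. by rewrite eval_Fimp eval_bigand eval_Gamma. Qed.

Definition block_separated (b : qblock) (K : seq nat) :=
  [/\ uniq (local_vars b), {in local_vars b, forall v, v \notin K}
    & {subset vars (qform b) <= K}].

Definition separated (D : seq qblock) (K : seq nat) :=
  [/\ uniq (fresh_vars D), {in fresh_vars D, forall v, v \notin K}
    & forall b, List.In b D -> {subset vars (qform b) <= K}].

Lemma fresh_vars_cons b D :
  perm_eq (fresh_vars (b :: D)) (local_vars b ++ fresh_vars D).
Proof.
apply/permP => v; rewrite /fresh_vars /Xplus /Xminus /= !count_cat /=.
rewrite -/(xplus b) -/(xminus b) /xplus /xminus; lia.
Qed.

Lemma separated_cons b D K : separated (b :: D) K ->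
  [/\ separated D K, block_separated b K
    & {in fresh_vars D ++ K, forall v, v \notin local_vars b}].
Proof.
case=> Hu HK Hvars; have Hperm := fresh_vars_cons b D.
have mem_cons v : v \in fresh_vars (b :: D) = (v \in local_vars b) || (v \in fresh_vars D).
  by rewrite (perm_mem Hperm) mem_cat.
move: Hu; rewrite (perm_uniq Hperm) cat_uniq => /and3P[Hub /hasPn Hdisj HuD].
split.
- split=> // [v Hv|b' Hb']; [by apply: HK; rewrite mem_cons Hv orbT|by apply: Hvars; right].
- split=> // [v Hv|]; [by apply: HK; rewrite mem_cons Hv|by apply: Hvars; left].
- move=> v; rewrite mem_cat => /orP[/Hdisj //|HvK].
  by apply/negP => Hv; move: (HK v); rewrite mem_cons Hv HvK => /(_ isT).
Qed.

Lemma block_separatedP b K : block_separated b K ->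
  [/\ uniq (xplus b) && uniq (xminus b), (bp b \notin xplus b) && (bp b \notin xminus b),
      {in xminus b, forall v, v \notin xplus b},
      {in K, forall v, [&& v != bp b, v \notin xplus b & v \notin xminus b]}
    & {subset vars (bf b) <= K}].
Proof.
case=> Hu HK Hvars; move: Hu; rewrite /local_vars !cat_uniq /= orbF andbT.
case/and4P=> Hup /hasPn Hpm Hum Hbm.
split; first by rewrite Hup Hum.
- by rewrite Hbm andbT Hpm // mem_cat inE eqxx orbT.
- by move=> v Hv; rewrite Hpm // mem_cat Hv.
- move=> v HvK; have : v \notin local_vars b by apply/negP => /HK; rewrite HvK.
  by rewrite !mem_cat inE !negb_or => /and3P[-> -> ->].
- by move=> y Hy; apply: Hvars; rewrite /= mem_cat Hy orbT.
Qed.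

Lemma local_vars_sub b D : List.In b D -> {subset local_vars b <= fresh_vars D}.
Proof.
elim: D => //= b' D IH [<-|Hb] v Hv; rewrite (perm_mem (fresh_vars_cons b' D)) mem_cat.
- by rewrite Hv.
- by rewrite IH ?orbT.
Qed.

Lemma mem_Pset_cons b D v :
  (v \in Pset (b :: D) xp) = [|| v == bp b, v \in xplus b | v \in Pset D xp].
Proof.
rewrite /Pset /Xplus /= !mem_cat inE -/(xplus b) -/(Xplus D xp).
by case: (v == bp b); case: (v \in xplus b); rewrite /= ?orbT.
Qed.

Lemma mem_Nset_cons b D v :
  (v \in Nset (b :: D) xm) = (v \in xminus b) || (v \in Nset D xm).
Proof. by rewrite /Nset /Xminus /= mem_cat. Qed.

Lemma Pset_sub D : {subset Pset D xp <= fresh_vars D}.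
Proof. by move=> v; rewrite /Pset /fresh_vars !mem_cat => /orP[->|->]; rewrite ?orbT. Qed.

Lemma Nset_sub D : {subset Nset D xm <= fresh_vars D}.
Proof. by move=> v; rewrite /Nset /fresh_vars !mem_cat => ->; rewrite orbT. Qed.

Lemma sigma_iE b y : sigma_i xp b y = FVar (rename_plus b y).
Proof. by rewrite /sigma_i /rename_plus; case: ifP. Qed.

Lemma eval_sigma_i b K V : block_separated b K ->
  eval (subst (bf b) (sigma_i xp b)) V = eval (bf b) (V \o rename_plus b).
Proof.
move=> Hsep; have [_ _ _ HK Hvars] := block_separatedP Hsep.
apply: eval_subst_rename => y; rewrite /sigma_i /rename_plus; case: ifP => // Hy; last by left.
by right; apply/negP => /Hvars /HK /and3P[_ + _]; rewrite mem_xplus.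
Qed.

Lemma block_constraint_ext b K V V' : block_separated b K ->
  {in local_vars b ++ K, V =1 V'} -> block_constraint V b = block_constraint V' b.
Proof.
move=> Hsep eqV; have [_ _ _ _ Hvars] := block_separatedP Hsep.
have eqV_plus x : x \in bX b -> V (xp (bp b) x) = V' (xp (bp b) x).
  by move=> Hx; rewrite eqV // !mem_cat mem_xplus.
have eqV_minus x : x \in bX b -> V (xm (bp b) x) = V' (xm (bp b) x).
  by move=> Hx; rewrite eqV // !mem_cat mem_xminus ?orbT.
rewrite /block_constraint !(eval_sigma_i _ Hsep) eqV ?mem_cat ?inE ?eqxx ?orbT //.
rewrite (@eval_ext _ (bf b) _ (V' \o rename_plus b)) => [|y Hy]; last first.
  rewrite /= /rename_plus; case: ifP => Hx; first exact: eqV_plus.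
  by rewrite eqV // mem_cat Hvars ?orbT.
congr (_ && (_ ==> _)); apply: eq_in_all => x; rewrite mem_undup => Hx.
by rewrite eqV_plus // eqV_minus.
Qed.

(* [p_b] gets the value of the block and [x^+] a witness of it, chosen equal to [x^-] when
   [Gamma] asks for that. *)
Lemma block_solution b K (V1 V' : nat -> bool) : block_separated b K ->
  {in K ++ xminus b, V' =1 V1} -> exists V2,
  [/\ agree_off (bp b :: xplus b) V2 V', block_constraint V2 b
    & V2 (bp b) = eval (qform b) V1].
Proof.
move=> Hsep eqV'; have [/andP[Hup _] /andP[Hbp Hbm] Hmp HK Hvars] := block_separatedP Hsep.
have [W [WV1 HgW WT]] :=
  exists_quantifier_witness (bq b) (bX b) (bf b) V1 (fun x => V1 (xm (bp b) x)).
have [U [UV' UW]] := exists_valuation_on_image W V' Hup.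
pose V2 v := if v == bp b then eval (qform b) V1 else U v.
have V2p : V2 (bp b) = eval (qform b) V1 by rewrite /V2 eqxx.
have V2U v : v != bp b -> V2 v = U v by rewrite /V2 => /negbTE ->.
have V2_plus x : x \in bX b -> V2 (xp (bp b) x) = W x.
  move=> Hx; rewrite V2U ?UW //; apply: contraNneq Hbp => <-; exact: mem_xplus.
have V2_minus x : x \in bX b -> V2 (xm (bp b) x) = V1 (xm (bp b) x).
  move=> Hx; have Hm := mem_xminus Hx.
  rewrite V2U; last by apply: contraNneq Hbm => <-.
  by rewrite UV' ?Hmp // eqV' // mem_cat Hm orbT.
have V2_K v : v \in K -> V2 v = V1 v.
  move=> Hv; have /and3P[Hne Hnp _] := HK v Hv.
  by rewrite V2U // UV' // eqV' // mem_cat Hv.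
exists V2; split=> //.
- by move=> v; rewrite inE negb_or => /andP[Hne Hv]; rewrite V2U ?UV'.
rewrite /block_constraint (eval_sigma_i _ Hsep) V2p.
have -> : eval (bf b) (V2 \o rename_plus b) = eval (bf b) W.
  apply: eval_ext => y Hy; rewrite /= /rename_plus; case: ifP => Hx; first exact: V2_plus.
  by rewrite V2_K ?Hvars // WV1 ?Hx.
rewrite HgW eqxx /=; apply/implyP => /WT W_minus; apply/allP => x; rewrite mem_undup => Hx.
by rewrite V2_plus // V2_minus // W_minus.
Qed.

Definition forces (V V1 : nat -> bool) (b : qblock) :=
  forall V2, {in vars (qform b), V2 =1 V} -> {in xminus b, V2 =1 V1} ->
  block_constraint V2 b -> V2 (bp b) = eval (qform b) V.

(* [x^-] is set to a witness of the value of the block: if [p_b] took the other value,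
   [Gamma] would make [x^+] copy [x^-] and so force [phi_b[x^+]], hence [p_b], to that value. *)
Lemma block_forcing b K (V V1' : nat -> bool) : block_separated b K ->
  exists V1, agree_off (xminus b) V1 V1' /\ forces V V1 b.
Proof.
move=> Hsep; have [/andP[_ Hum] _ _ _ _] := block_separatedP Hsep.
have [W [WV HgW _]] := exists_quantifier_witness (bq b) (bX b) (bf b) V V.
have [U [UV1' UW]] := exists_valuation_on_image W V1' Hum.
exists U; split=> // V2 V2V V2U /andP[/eqP]; rewrite (eval_sigma_i _ Hsep) => Hp.
set U2 := V2 \o rename_plus b in Hp *.
have U2V y : y \in vars (bf b) -> y \notin bX b -> U2 y = V y.
  by move=> Hy Hx; rewrite /U2 /= /rename_plus (negbTE Hx) V2V // mem_cat Hy orbT.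
have U2W : copies_agree V2 b -> eval (bf b) U2 = eval (qform b) V.
  move=> /allP Hc; rewrite -HgW; apply: eval_ext => y Hy.
  case Hx: (y \in bX b); last by rewrite U2V ?Hx // WV ?Hx.
  move: (Hc y); rewrite mem_undup Hx => /(_ isT) /eqP.
  by rewrite /U2 /= /rename_plus Hx => ->; rewrite V2U ?mem_xminus // UW.
have [U' U'V EU'] := exists_variant_eval U2V.
have ex_intro : bq b = Qex -> eval (bf b) U2 -> eval (qform b) V.
  by move=> Eq Hg; rewrite /qform Eq /=; apply/asboolP; exists U'; rewrite EU'.
have all_elim : bq b = Qall -> eval (qform b) V -> eval (bf b) U2.
  by move=> Eq; rewrite /qform Eq /= -EU' => /asboolP; apply.
rewrite Hp; case Eq: (bq b); case E: (eval (bf b) U2) => Hguard; rewrite /= in Hguard.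
- by rewrite ex_intro.
- by rewrite -U2W ?E.
- by rewrite -U2W ?E.
- by apply/esym/negbTE/negP => /(all_elim Eq); rewrite E.
Qed.

Lemma separated_block D K b : separated D K -> List.In b D -> block_separated b K.
Proof.
elim: D => //= b' D IH Hsep; have [HsepD Hsepb _] := separated_cons Hsep.
by case=> [<- //|Hb]; apply: IH HsepD Hb.
Qed.

Lemma exists_solution D K : separated D K -> forall V1, exists V2,
  [/\ agree_off (Pset D xp) V2 V1, forall b, List.In b D -> block_constraint V2 b
    & forall b, List.In b D -> V2 (bp b) = eval (qform b) V1].
Proof.
elim: D => [|b D IH] Hsep V1; first by exists V1.
have [HsepD Hsepb Hdisj] := separated_cons Hsep; have [_ HKD _] := HsepD.
have [V2' [V2'V1 HcD HvalD]] := IH HsepD V1.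
have eqV' : {in K ++ xminus b, V2' =1 V1}.
  move=> v Hv; apply: V2'V1; apply/negP => /Pset_sub Hf.
  move: Hv; rewrite mem_cat (negbTE (HKD v Hf)) /= => /local_xminus.
  by apply/negP; apply: Hdisj; rewrite mem_cat Hf.
have [V2 [V2V2' Hcb Hvalb]] := block_solution Hsepb eqV'.
have eqV2 : {in fresh_vars D ++ K, V2 =1 V2'}.
  move=> v /Hdisj Hv; apply: V2V2'; apply: contra Hv; rewrite inE => /orP[/eqP->|].
    exact: local_bp.
  exact: local_xplus.
exists V2; split.
- move=> v; rewrite mem_Pset_cons !negb_or => /and3P[H1 H2 H3].
  by rewrite V2V2' ?inE ?negb_or ?H1 ?H2 // V2'V1.
- move=> b' [<- //|Hb'].
  rewrite (@block_constraint_ext _ _ _ V2' (separated_block HsepD Hb')) ?HcD // => v.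
  rewrite mem_cat => /orP[/(local_vars_sub Hb') Hv|HvK];
    by rewrite eqV2 // mem_cat ?Hv ?HvK ?orbT.
- move=> b' [<- //|Hb']; rewrite eqV2 ?HvalD //.
  by rewrite mem_cat (local_vars_sub Hb') ?local_bp.
Qed.

Lemma exists_forcing D K : separated D K -> forall V, exists V1,
  agree_off (Nset D xm) V1 V /\ forall b, List.In b D -> forces V V1 b.
Proof.
elim: D => [|b D IH] Hsep V; first by exists V.
have [HsepD Hsepb Hdisj] := separated_cons Hsep.
have [V1' [V1'V HfD]] := IH HsepD V.
have [V1 [V1V1' Hfb]] := block_forcing V V1' Hsepb.
exists V1; split.
- by move=> v; rewrite mem_Nset_cons negb_or => /andP[H1 H2]; rewrite V1V1' // V1'V.
- move=> b' [<- //|Hb'] V2 H1 H2; apply: HfD => // v Hv; rewrite H2 //; apply: V1V1'.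
  apply/negP => /local_xminus; apply/negP; apply: Hdisj.
  by rewrite mem_cat (local_vars_sub Hb') ?local_xminus.
Qed.

Lemma xminus_sub_Nset D b : List.In b D -> {subset xminus b <= Nset D xm}.
Proof.
elim: D => //= b' D IH [<-|/IH Hsub] v Hv; rewrite mem_Nset_cons ?Hv //.
by rewrite Hsub ?orbT.
Qed.

Lemma Nset_notin_Pset D K : separated D K -> {in Nset D xm, forall v, v \notin Pset D xp}.
Proof.
case=> + _ _; rewrite /fresh_vars cat_uniq => /and3P[_ /hasPn HXp].
rewrite cat_uniq => /and3P[_ /hasPn HXm _] v Hv.
rewrite /Pset mem_cat negb_or HXp ?mem_cat ?Hv //=.
by apply/negP => /HXm; rewrite Hv.
Qed.

Lemma sigmaD_bp D b : uniq (map (@bp S) D) -> List.In b D -> sigmaD D (bp b) = qform b.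
Proof.
elim: D => //= b' D IH /andP[Hn Hu] [<-|Hb]; rewrite /sigmaD /= ?eqxx //.
case: eqP => [E|_]; last exact: IH.
by move: Hn; rewrite E map_f_In.
Qed.

Lemma sigmaD_notin D y : y \notin map (@bp S) D -> sigmaD D y = FVar y.
Proof.
elim: D => //= b D IH; rewrite inE negb_or eq_sym => /andP[/negbTE Hn /IH].
by rewrite /sigmaD /= Hn.
Qed.

Lemma mem_map_bp D y : y \in map (@bp S) D -> exists2 b, List.In b D & y = bp b.
Proof.
elim: D => //= b D IH; rewrite inE => /orP[/eqP->|/IH[b' Hb' ->]]; first by exists b; [left|].
by exists b'; [right|].
Qed.

Definition max_block_depth (D : seq qblock) := foldr maxn 0 [seq depth (bf b) | b <- D].

Lemma leq_max_block_depth D b : List.In b D -> depth (bf b) <= max_block_depth D.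
Proof. by elim: D => //= b' D IH [<-|/IH Hb]; rewrite leq_max ?leqnn ?Hb ?orbT. Qed.

Lemma max_block_depth_leq D m :
  (forall b, List.In b D -> depth (bf b) <= m) -> max_block_depth D <= m.
Proof.
elim: D => //= b D IH Hm; rewrite geq_max Hm /=; last by left.
by apply: IH => b' Hb'; apply: Hm; right.
Qed.

Lemma depth_eqblock (b : qblock) : depth (eqblock xp xm b) = 0.
Proof. by rewrite depth_bigand; elim: (undup (bX b)) => //= x l ->. Qed.

Lemma depth_Gamma (D : seq qblock) :
  foldr maxn 0 [seq depth g | g <- Gamma_list D xp xm] = max_block_depth D.
Proof.
have depth_guards (l : seq qblock) (p : qblock -> form) : (forall b, depth (p b) = 0) ->
    foldr maxn 0 [seq depth (Fimp (p b) (eqblock xp xm b)) | b <- l] = 0.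
  by move=> Hp; elim: l => //= b l ->; rewrite [depth _]/= Hp depth_eqblock.
rewrite /Gamma_list !map_cat !foldr_cat -!map_comp !depth_guards //.
congr foldr; apply: eq_map => b /=.
by have [-> _ _ _] := subst_rename_metrics (bf b) (sigma_iE b); rewrite max0n maxn0.
Qed.

Lemma depth_tr q (beta : form) D :
  isbool beta -> depth (tr q beta D xp xm) = max_block_depth D.
Proof.
move=> Hb; case: q.
- by rewrite [depth _]/= depth_bigand depth_Gamma depth_isbool // !maxn0.
- rewrite [tr _ _ _ _ _]/= depth_bigand map_cat foldr_cat /=.
  by rewrite depth_isbool // maxn0 depth_Gamma.
Qed.

Definition block_weight (b : qblock) := weight (bf b) + 4 * card_block (bX b) + 6.

Lemma weight_qform (b : qblock) : weight (qform b) = (block_weight b).+1.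
Proof. by rewrite /block_weight /weight [len _]/= [nv _]/= [nb _]/=; lia. Qed.

Lemma weight_eqblock (b : qblock) : 0 < card_block (bX b) ->
  weight (eqblock xp xm b) + 1 = 4 * card_block (bX b).
Proof.
rewrite /eqblock /card_block => Hc; rewrite weight_bigand ?size_map //.
rewrite -map_comp; elim: (undup (bX b)) => //= x l ->.
by rewrite weight_FOp /= !weight_FVar; lia.
Qed.

Lemma weight_Gamma D :
  sumn [seq weight g + 1 | g <- Gamma_list D xp xm] <= sumn [seq block_weight b | b <- D].
Proof.
rewrite /Gamma_list !map_cat !sumn_cat -!map_comp !sumnE !big_map !big_filter.
rewrite !(big_mkcond (fun b => _ && _)) -!big_split /=; apply: leq_sum => b _.
have Hiff : weight (Fiff (FVar (bp b)) (subst (bf b) (sigma_i xp b))) = (weight (bf b)).+2.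
  have [_ Hl Hb Hv] := subst_rename_metrics (bf b) (sigma_iE b).
  have Ew : weight (subst (bf b) (sigma_i xp b)) = weight (bf b) by rewrite /weight Hl Hb Hv.
  by rewrite weight_FOp /= Ew weight_FVar; lia.
rewrite Hiff /block_weight; have [Hc|Hc] := posnP (card_block (bX b)).
  by move: Hc; rewrite /card_block => /eqP; rewrite size_eq0 => /eqP ->; rewrite !andbF; lia.
have Hne : undup (bX b) != [::] by rewrite -size_eq0 -lt0n.
have := weight_eqblock Hc; rewrite Hne /Fneg; case: (bq b) => /=.
  by rewrite !weight_FOp /= weight_FOp /= ?weight_FVar; lia.
by rewrite !weight_FOp /= ?weight_FVar; lia.
Qed.

Lemma weight_tr_all (beta : form) D : isbool beta ->
  weight (tr Qall beta D xp xm) <= sumn [seq block_weight b | b <- D] + len beta.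
Proof.
move=> Hb; rewrite -(leq_add2r 1) [tr _ _ _ _ _]/= weight_bigand ?size_cat ?addn1 //.
by rewrite map_cat sumn_cat /= weight_isbool //; have := weight_Gamma D; lia.
Qed.

Section Decomposition.
Variables (phi beta : form) (D : seq qblock).
Hypothesis decomp : is_decomp phi beta D xp xm.

Lemma decomp_bp_uniq : uniq (map (@bp S) D).
Proof. by case: decomp => _ _ _ + _; rewrite !cat_uniq => /and3P[_ _ /and3P[]]. Qed.

Lemma decomp_bp_vars b : List.In b D -> bp b \in vars beta.
Proof.
case: decomp => _ /allP_In Hocc _ _ _ /Hocc; rewrite occE => /eqP Hc.
by rewrite -has_pred1 has_count Hc.
Qed.

Lemma decomp_separated : separated D (vars phi).
Proof.
case: decomp => Hbool _ Hsub Hu Hfresh; split=> // b Hb v Hv; rewrite -Hsub.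
apply: (mem_vars_subst_bool Hbool (decomp_bp_vars Hb)).
by rewrite sigmaD_bp // decomp_bp_uniq.
Qed.

Lemma eval_decomp (V V2 : nat -> bool) : {in vars phi, V2 =1 V} ->
  (forall b, List.In b D -> V2 (bp b) = eval (qform b) V) -> eval beta V2 = eval phi V.
Proof.
case: decomp => Hbool _ Hsub _ _ eqV Hval; rewrite -Hsub eval_subst_bool //.
apply: eval_ext => y Hy; case Hp: (y \in map (@bp S) D).
- by have [b Hb ->] := mem_map_bp Hp; rewrite Hval // sigmaD_bp // decomp_bp_uniq.
- rewrite sigmaD_notin ?Hp //= eqV // -Hsub.
  by apply: (mem_vars_subst_bool Hbool Hy); rewrite sigmaD_notin ?Hp // inE.
Qed.

Lemma isbool_decomp : isbool phi = nilp D.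
Proof.
have [Hbool _ Hsub _ _] := decomp; case ED: D => [|b D'] /=.
  by rewrite -Hsub isbool_subst // => y; rewrite ED.
have Hb : List.In b D by rewrite ED; left.
apply/negP; rewrite -Hsub => Hphi.
by have := isbool_subst_var Hbool Hphi (decomp_bp_vars Hb); rewrite sigmaD_bp ?decomp_bp_uniq.
Qed.

Lemma depth_decomp : ~~ nilp D -> depth phi = (max_block_depth D).+1.
Proof.
have [Hbool _ Hsub _ _] := decomp; have Hu := decomp_bp_uniq.
have Hle : depth phi <= (max_block_depth D).+1.
  rewrite -Hsub; apply: depth_subst_bool_le => // y _.
  case Hy: (y \in map (@bp S) D); last by rewrite sigmaD_notin ?Hy.
  by have [b Hb ->] := mem_map_bp Hy; rewrite sigmaD_bp //= add1n ltnS leq_max_block_depth.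
have Hge b : List.In b D -> (depth (bf b)).+1 <= depth phi.
  by move=> Hb; rewrite -Hsub -[_.+1]/(depth (qform b)) -(sigmaD_bp Hu Hb);
     apply: depth_subst_bool_ge (decomp_bp_vars Hb).
case ED: D => [//|b D'] _; rewrite -ED.
have Hb : List.In b D by rewrite ED; left.
have /max_block_depth_leq : forall b', List.In b' D -> depth (bf b') <= (depth phi).-1.
  by move=> b' /Hge; case: (depth phi).
by have := Hge b Hb; lia.
Qed.

Lemma weight_decomp : len beta + sumn [seq block_weight b | b <- D] <= weight phi.
Proof.
have [Hbool _ Hsub _ _] := decomp; have := weight_subst_bool (sigmaD D) Hbool.
rewrite Hsub; set h := fun y => (weight (sigmaD D y)).-1.
have -> : sumn [seq weight (sigmaD D y) | y <- vars beta] =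
    sumn [seq h y | y <- vars beta] + size (vars beta).
  by elim: (vars beta) => //= y l ->; rewrite /h; have := weight_pos (sigmaD D y); lia.
have -> : [seq block_weight b | b <- D] = [seq h y | y <- map (@bp S) D].
  rewrite -map_comp; apply: eq_map_In => b Hb.
  by rewrite /h /= sigmaD_bp ?decomp_bp_uniq // weight_qform.
have : sumn [seq h y | y <- map (@bp S) D] <= sumn [seq h y | y <- vars beta].
  apply: leq_sumn_uniq_sub decomp_bp_uniq _ => _ /mem_map_bp[b Hb ->].
  exact: decomp_bp_vars.
lia.
Qed.

Lemma depth_tr_decomp q :
  depth (tr q beta D xp xm) = if isbool phi then 0 else depth phi - 1.
Proof.
have [Hbool _ _ _ _] := decomp; rewrite depth_tr // isbool_decomp.
by case: (boolP (nilp D)) => [/nilP -> //|HD]; rewrite depth_decomp // subn1.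
Qed.

End Decomposition.

Lemma tr_equiv (phi beta : form) (D : seq qblock) q : is_decomp phi beta D xp xm ->
  fequiv (FQ q (Nset D xm) (FQ (dual q) (Pset D xp) (tr q beta D xp xm))) phi.
Proof.
move=> decomp V; have Hsep := decomp_separated decomp; have [_ HK Hvars] := Hsep.
have agree_vars (V1 V2 : nat -> bool) : agree_off (Nset D xm) V1 V ->
    agree_off (Pset D xp) V2 V1 -> {in vars phi, V2 =1 V}.
  move=> H1 H2 y Hy; have Hf : y \notin fresh_vars D by apply/negP => /HK; rewrite Hy.
  by rewrite H2 ?H1 //; apply: contra Hf; [exact: Nset_sub|exact: Pset_sub].
have solved V1 : agree_off (Nset D xm) V1 V -> exists V2,
    [/\ agree_off (Pset D xp) V2 V1, all (block_constraint V2) D & eval beta V2 = eval phi V].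
  move=> H1; have [V2 [H2 Hc Hval]] := exists_solution Hsep V1.
  exists V2; split=> //; first exact/allP_In.
  apply: (eval_decomp decomp (agree_vars _ _ H1 H2)) => b Hb; rewrite Hval //.
  by apply: eval_ext => y /(Hvars b Hb); apply: (agree_vars V1 V1 H1).
have [V1 [H1 Hforce]] := exists_forcing Hsep V.
have forced V2 : agree_off (Pset D xp) V2 V1 -> all (block_constraint V2) D ->
    eval beta V2 = eval phi V.
  move=> H2 /allP_In Hc; apply: (eval_decomp decomp (agree_vars _ _ H1 H2)) => b Hb.
  apply: (Hforce b Hb V2 _ _ (Hc b Hb)) => [y /(Hvars b Hb)|v /(xminus_sub_Nset Hb) Hv].
    exact: (agree_vars _ _ H1 H2).
  exact/H2/(Nset_notin_Pset Hsep).
case: q; rewrite [dual _]/=.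
- rewrite eval_FQ_ex; apply/asboolP/idP => [[V1' [H1']]|Hphi].
    rewrite eval_FQ_all => /asboolP H; have [V2 [H2 Hc <-]] := solved V1' H1'.
    by move: (H V2 H2); rewrite eval_tr_ex Hc.
  exists V1; split=> //; rewrite eval_FQ_all; apply/asboolP => V2 H2.
  by rewrite eval_tr_ex; apply/implyP => Hc; rewrite (forced V2).
- rewrite eval_FQ_all; apply/asboolP/idP => [H|Hphi V1' H1'].
    move: (H V1 H1); rewrite eval_FQ_ex => /asboolP[V2 [H2]].
    by rewrite eval_tr_all => /andP[Hc Hb]; rewrite -(forced V2).
  rewrite eval_FQ_ex; apply/asboolP; have [V2 [H2 Hc E]] := solved V1' H1'.
  by exists V2; split=> //; rewrite eval_tr_all Hc E.
Qed.

End Translation.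

Theorem lemma2 (S : signature) (phi beta : form S) (D : seq (qblock S))
    (xp xm : nat -> nat -> nat) (q : quant) :
  wf phi -> is_decomp phi beta D xp xm ->
  [/\ fequiv (FQ q (Nset D xm) (FQ (dual q) (Pset D xp) (tr q beta D xp xm))) phi,
      depth (tr q beta D xp xm) = (if isbool phi then 0 else depth phi - 1)
    & len (tr Qall beta D xp xm) + 3 * nv (tr Qall beta D xp xm)
        + 6 * nb (tr Qall beta D xp xm)
      <= len phi + 3 * nv phi + 6 * nb phi].
Proof.
move=> _ decomp; have [Hbool _ _ _ _] := decomp.
split; [exact: tr_equiv decomp|exact: depth_tr_decomp decomp q|].
change (weight (tr Qall beta D xp xm) <= weight phi).
by apply: leq_trans (weight_tr_all _ _ _ Hbool) _; rewrite addnC (weight_decomp decomp).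
Qed.
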